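(* Let $1\le h\le n$, $B=(b_{i,j})\in\Theta_\vartriangle(n,r)$ and $\lambda=\mathrm{ro}(B)$. (1) If $\varepsilon\in\{1,-1\}$ and $\lambda_{h+\varepsilon}\ge1$, then $$[E^\vartriangle_{h,h+\varepsilon}+\mathrm{diag}(\lambda-\mathbf e_{h+\varepsilon})]_1[B]_1=\sum_{i\in\mathbb Z,\ b_{h+\varepsilon,i}\ge1}(b_{h,i}+1)[B+E^\vartriangle_{h,i}-E^\vartriangle_{h+\varepsilon,i}]_1.$$ (2) If $m\in\mathbb Z\setminus\{0\}$ and $\lambda_h\ge1$, then $$[E^\vartriangle_{h,h+mn}+\mathrm{diag}(\lambda-\mathbf e_h)]_1[B]_1=\sum_{s\in\mathbb Z,\ b_{h,s}\ge1}(b_{h,s+mn}+1)[B+E^\vartriangle_{h,s+mn}-E^\vartriangle_{h,s}]_1.$$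
   Context: Fix $n\ge2$, $r\ge1$. $I_\vartriangle(n,r)$ is the set of integer sequences $\mathbf i=(i_k)_{k\in\mathbb Z}$ with $i_{k+r}=i_k+n$. $\Omega_{\mathbb Q}^{\otimes r}$ is the $\mathbb Q$-space with basis $\omega_{\mathbf i}$ ($\mathbf i\in I_\vartriangle(n,r)$), with right action of the affine symmetric group $\mathfrak S_{\vartriangle,r}$ (bijections $w:\mathbb Z\to\mathbb Z$, $w(k+r)=w(k)+r$) given by $\omega_{\mathbf i}w=\omega_{\mathbf iw}$, $(\mathbf iw)_k=i_{w(k)}$; $\mathcal S_\vartriangle(n,r)_{\mathbb Q}=\mathrm{End}_{\mathbb Q\mathfrak S_{\vartriangle,r}}(\Omega_{\mathbb Q}^{\otimes r})$ with composition as product. $\Theta_\vartriangle(n,r)$ is the set of matrices $A=(a_{k,l})_{k,l\in\mathbb Z}$ over $\mathbb N$ with $a_{k+n,l+n}=a_{k,l}$, finitely many nonzero entries per row, and $\sum_{1\le k\le n,\,l}a_{k,l}=r$; $\mathrm{ro}(A)=(\sum_la_{k,l})_{k\in\mathbb Z}$. For $\mathbf i,\mathbf j\in I_\vartriangle(n,r)$ let $M(\mathbf i,\mathbf j)=(a_{k,l})$ with $a_{k,l}=|\{s\in\mathbb Z\mid i_s=k,\ j_s=l\}|$; $[A]_1$ is the map $\omega_{\mathbf j}\mapsto\sum_{\mathbf i:\,M(\mathbf i,\mathbf j)=A}\omega_{\mathbf i}$, and $[A]_1:=0$ if $A$ has a negative entry. $E^\vartriangle_{i,j}$ has $1$ at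 positions $(i+sn,j+sn)$, $s\in\mathbb Z$, and $0$ elsewhere; $\mathbf e_h$ is the $n$-periodic unit vector; $\mathrm{diag}(\mu)$ is the diagonal matrix with entries $\mu_i$; indices are read mod $n$ where relevant. *)

From HB Require Import structures.
From mathcomp Require Import all_boot all_order all_algebra.
From mathcomp Require Import boolp classical_sets functions cardinality fsbigop.
Set Implicit Arguments. Unset Strict Implicit. Unset Printing Implicit Defensive.
Import Order.TTheory GRing.Theory Num.Theory.
Local Open Scope classical_set_scope.
Local Open Scope ring_scope.

Definition mat := int -> int -> int.

Definition Iset (n r : nat) : set (int -> int) :=
  [set i | forall k : int, i (k + r%:Z) = i k + n%:Z].

Definition Mof (i j : int -> int) : mat := fun k l =>
  ((\big[addn/0%N]_(s \in [set s : int | i s = k /\ j s = l]) 1%N)%N)%:Z.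

Definition in_Theta (n r : nat) (A : mat) : Prop :=
  [/\ (forall k l, A (k + n%:Z) (l + n%:Z) = A k l),
      (forall k l, 0 <= A k l),
      (forall k, finite_set [set l | A k l != 0]) &
      \sum_(k \in [set k : int | 1 <= k <= n%:Z]) \sum_(l \in [set: int]) A k l
        = r%:Z ].

Definition ro (A : mat) : int -> int := fun k => \sum_(l \in [set: int]) A k l.

Definition Edelta (n : nat) (i j : int) : mat := fun k l =>
  if `[< exists s : int, k = i + s * n%:Z /\ l = j + s * n%:Z >] then 1 else 0.

Definition unitv (n : nat) (h : int) : int -> int := fun k =>
  if `[< exists s : int, k = h + s * n%:Z >] then 1 else 0.

Definition diagm (mu : int -> int) : mat := fun k l => if k == l then mu k else 0.

(* Omega_Q^{(r)}: finite Q-linear combinations of the basis vectors omega_i,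
   i in I(n,r); a vector is given by its coordinate function. *)
Definition Omega (n r : nat) : set ((int -> int) -> rat) :=
  [set v | (forall i, ~ Iset n r i -> v i = 0) /\ finite_set [set i | v i != 0]].

Definition omega (i : int -> int) : (int -> int) -> rat := fun i' => (i' == i)%:R.

Definition br_basis (n r : nat) (A : mat) (j : int -> int) : (int -> int) -> rat :=
  fun i => \sum_(i' \in [set i' | Iset n r i' /\ Mof i' j = A]) omega i' i.

(* [A]_1 as an endomorphism of Omega (linear extension), and [A]_1 := 0
   if A has a negative entry. *)
Definition br (n r : nat) (A : mat) (v : (int -> int) -> rat) : (int -> int) -> rat :=
  if `[< exists k l, A k l < 0 >] then (fun _ => 0)
  else fun i => \sum_(j \in Iset n r) v j * br_basis n r A j i.

From HB Require Import structures.
From mathcomp Require Import all_boot all_order all_algebra finmap.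
From mathcomp Require Import boolp classical_sets functions cardinality fsbigop.
From mathcomp Require Import zify ring.
Set Implicit Arguments. Unset Strict Implicit. Unset Printing Implicit Defensive.
Import Order.TTheory GRing.Theory Num.Theory.
Local Open Scope classical_set_scope.
Local Open Scope ring_scope.

(* For x in I(n,r) the coefficient of omega_x in [X]_1 [B]_1 omega_j counts the y
   with M(x,y) = X and M(y,j) = B, where X = E_{h,h+d} + diag(ro B - e_{h+d}) and
   d = eps, resp. d = m n.  Off the diagonal X has the single periodic entry (h, h+d),
   so such a y agrees with x except on one residue class s0 mod r, where x_{s0} = h
   and y_{s0} = h + d (mod n); the diagonal of X is then automatic from the row sums
   of B = M(y,j).  Moving the s0-th step changes M(x,j) by E_{h,i} - E_{h+d,i} with
   i = j_{s0} (mod n), so M(y,j) = B iff M(x,j) = B + E_{h,i} - E_{h+d,i}, and the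
   admissible s0 for a given i are counted by the entry (h,i) of M(x,j), namely
   b_{h,i} + 1.  Part (2) is the case d = m n, with columns reindexed by m n. *)

Lemma int_affine_of_step (F : int -> int) (q : int) :
  (forall t, F (t + 1) = F t + q) -> forall t, F t = F 0 + t * q.
Proof.
move=> HF t; elim/int_rec: t => [|m IH|m IH]; first by rewrite mul0r addr0.
  by rewrite -addn1 PoszD HF IH; ring.
have := HF (- (m.+1%:Z)).
have -> : - (m.+1%:Z) + 1 = - (m%:Z) by rewrite -addn1 PoszD; ring.
rewrite IH -addn1 PoszD => H; apply/(@addIr _ q); rewrite -H; ring.
Qed.

Lemma Iset_shift n r i : Iset n r i -> forall k t, i (k + t * r%:Z) = i k + t * n%:Z.
Proof.
move=> Hi k t; rewrite (@int_affine_of_step (fun t => i (k + t * r%:Z)) n%:Z).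
  by rewrite mul0r addr0.
by move=> t'; rewrite mulrDl mul1r addrA Hi.
Qed.

Lemma Theta_shift n r B : in_Theta n r B -> forall k l t,
  B (k + t * n%:Z) (l + t * n%:Z) = B k l.
Proof.
case=> HB _ _ _ k l t.
rewrite (@int_affine_of_step (fun t => B (k + t * n%:Z) (l + t * n%:Z)) 0) ?mulr0.
  by rewrite !mul0r !addr0.
by move=> t'; rewrite !mulrDl !mul1r !addrA HB addr0.
Qed.

Lemma Iset_divz n r i s : Iset n r i ->
  i s = i (s %% r%:Z)%Z + (s %/ r%:Z)%Z * n%:Z.
Proof. by move=> Hi; rewrite -(Iset_shift Hi) addrC -divz_eq. Qed.

Lemma Iset_ext n r f g : (0 < r)%N -> Iset n r f -> Iset n r g ->
  (forall s : 'I_r, f s = g s) -> f = g.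
Proof.
move=> r0 Hf Hg E; apply/funext => s.
rewrite (Iset_divz s Hf) (Iset_divz s Hg); congr (_ + _).
have H0 : 0 <= (s %% r%:Z)%Z by rewrite modz_ge0 //; lia.
have H1 : (s %% r%:Z)%Z < r%:Z by rewrite ltz_pmod // ltz_nat.
have := E (Ordinal (n := r) (m := `|(s %% r%:Z)%Z|%N) (ltac:(lia))).
by rewrite /= gez0_abs.
Qed.

Lemma Edelta_eq1 n a b k l : Edelta n a b k l = 1 <->
  exists s : int, k = a + s * n%:Z /\ l = b + s * n%:Z.
Proof. by rewrite /Edelta; case: asboolP. Qed.

Lemma Edelta_eq0 n a b k l : Edelta n a b k l = 0 <->
  ~ exists s : int, k = a + s * n%:Z /\ l = b + s * n%:Z.
Proof. by rewrite /Edelta; case: asboolP. Qed.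

Lemma Edelta_01 n a b k l : Edelta n a b k l = 0 \/ Edelta n a b k l = 1.
Proof. by rewrite /Edelta; case: asboolP; auto. Qed.

Lemma Edelta_ge0 n a b k l : 0 <= Edelta n a b k l.
Proof. by case: (Edelta_01 n a b k l) => ->. Qed.

Lemma Edelta_id n a b : Edelta n a b a b = 1.
Proof. by apply/Edelta_eq1; exists 0; rewrite mul0r !addr0. Qed.

Lemma Edelta_shift n a b t : Edelta n (a + t * n%:Z) (b + t * n%:Z) = Edelta n a b.
Proof.
apply/funext => k; apply/funext => l; rewrite /Edelta.
congr (if _ then _ else _); apply: asbool_equiv_eq; split.
  by case=> s [-> ->]; exists (t + s); split; ring.
by case=> s [-> ->]; exists (s - t); split; ring.
Qed.

Lemma Edelta_sym n a b k l : Edelta n a b k l = Edelta n k l a b.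
Proof.
rewrite /Edelta; congr (if _ then _ else _); apply: asbool_equiv_eq.
by split => -[t [-> ->]]; exists (- t); split; ring.
Qed.

Lemma Edelta_diag n a k l : Edelta n a a k l = if k == l then unitv n a k else 0.
Proof.
case: eqP => [<-|kl].
  rewrite /Edelta /unitv; congr (if _ then _ else _); apply: asbool_equiv_eq.
  by split => -[t]; [case=> -> _|move=> ->]; exists t.
by apply/Edelta_eq0 => -[t [Hk Hl]]; apply: kl; rewrite Hk Hl.
Qed.

Lemma Edelta_row_shift_eq0 n a d i : (0 < n)%N -> d != 0 ->
  Edelta n a i (a + d) i = 0.
Proof.
move=> n0 dn0; apply/Edelta_eq0 => -[t [H1 H2]].
have : t * n%:Z = 0 by lia.
move/eqP; rewrite mulf_eq0 => /orP [/eqP t0|]; last by lia.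
by move: H1; rewrite t0 mul0r addr0; lia.
Qed.

Lemma unitv_eq1 n a k : (exists t : int, k = a + t * n%:Z) -> unitv n a k = 1.
Proof. by rewrite /unitv; case: asboolP. Qed.

Lemma unitv_eq0 n a k : ~ (exists t : int, k = a + t * n%:Z) -> unitv n a k = 0.
Proof. by rewrite /unitv; case: asboolP. Qed.

Lemma unitv_shift n a t : unitv n (a + t * n%:Z) = unitv n a.
Proof.
apply/funext => k; rewrite /unitv; congr (if _ then _ else _); apply: asbool_equiv_eq.
by split => -[s ->]; [exists (t + s)|exists (s - t)]; ring.
Qed.

Definition ind (P : Prop) : rat := if `[< P >] then 1 else 0.

Lemma indT (P : Prop) : P -> ind P = 1.
Proof. by rewrite /ind; case: asboolP. Qed.

Lemma indF (P : Prop) : ~ P -> ind P = 0.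
Proof. by rewrite /ind; case: asboolP. Qed.

Lemma ind_and (P Q : Prop) : ind (P /\ Q) = ind P * ind Q.
Proof.
have [[p q]|npq] := asboolP (P /\ Q); first by rewrite !indT ?mulr1.
rewrite (indF npq); have [p|np] := asboolP P; last by rewrite (indF np) mul0r.
by rewrite (@indF Q) ?mulr0 // => q; apply: npq.
Qed.

Lemma br_basis_ind n r A j i : br_basis n r A j i = ind (Iset n r i /\ Mof i j = A).
Proof.
rewrite /br_basis; have [H|H] := asboolP (Iset n r i /\ Mof i j = A).
  rewrite indT // (fsbigE [:: i]) //=.
  - by rewrite big_cons big_nil mem_set // /omega eqxx addr0.
  - by move=> y /=; rewrite inE => /eqP ->.
  - by move=> i' _; rewrite inE /omega eq_sym => /negPf ->.
rewrite indF // fsbig1 // => i' Si'; rewrite /omega; case: eqP => // Ei.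
by case: H; rewrite Ei.
Qed.

(* Covers the convention [A]_1 = 0 for A with a negative entry, as M(x,j) >= 0. *)
Lemma br_ind n r A w x :
  br n r A w x = \sum_(j \in Iset n r) w j * ind (Iset n r x /\ Mof x j = A).
Proof.
rewrite /br; case: asboolP => [[k [l Hkl]]|Hn].
  rewrite fsbig1 // => j _; rewrite indF ?mulr0 // => -[_ E].
  by move: Hkl; rewrite -E /Mof ltNge => /negP; apply.
by apply: eq_fsbigr => j _; rewrite br_basis_ind.
Qed.

Lemma br_notIset n r A w x : ~ Iset n r x -> br n r A w x = 0.
Proof.
by move=> nI; rewrite br_ind fsbig1 // => j _; rewrite indF ?mulr0 // => -[].
Qed.

Lemma br_seq n r A v x (L : seq (int -> int)) : uniq L ->
  (forall j, j \in L -> Iset n r j) -> (forall j, j \notin L -> v j = 0) ->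
  Iset n r x ->
  br n r A v x = \sum_(j <- L) v j * ind (Mof x j = A).
Proof.
move=> uL LI vL Ix; rewrite br_ind (fsbigE L) //; last first.
  by move=> j _ /vL ->; rewrite mul0r.
rewrite big_mkcond [RHS]big_seq [LHS]big_seq; apply: eq_bigr => j jL.
rewrite mem_set /=; last exact: LI.
congr (_ * ind _).
by apply: propext; split => // -[].
Qed.

Lemma Omega_seq n r v : Omega n r v -> exists L : seq (int -> int),
  [/\ uniq L, (forall j, j \in L -> Iset n r j) & (forall j, j \notin L -> v j = 0)].
Proof.
case=> vI vfin; exists (fset_set [set j | v j != 0]); split.
- exact: fset_uniq.
- move=> j; rewrite in_fset_set // inE /= => vj.
  by apply: contrapT => nI; move/eqP: vj; apply; apply: vI.
- move=> j; rewrite in_fset_set // => /negP H; apply/eqP; apply: contrapT => H'.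
  by apply: H; apply: mem_set; apply/negP.
Qed.

Definition shift_at (r : nat) (x : int -> int) (s0 d : int) : int -> int :=
  fun s => x s + (if (s %% r%:Z)%Z == s0 then d else 0).

Section PeriodicSequences.

Variables n r : nat.
Hypotheses (n_gt0 : (0 < n)%N) (r_gt0 : (0 < r)%N).

Lemma Mof_residues i j k l : Iset n r i -> Iset n r j ->
  Mof i j k l = (\big[addn/0%N]_(s0 \in [set s0 : int | 0 <= s0 < r%:Z
                      /\ Edelta n (i s0) (j s0) k l = 1]) 1%N)%:Z.
Proof.
move=> Hi Hj; have nn0 : n%:Z != 0 by lia.
rewrite /Mof (reindex_fsbig (fun s : int => (s %% r%:Z)%Z)
  [set s | i s = k /\ j s = l]
  [set s0 : int | 0 <= s0 < r%:Z /\ Edelta n (i s0) (j s0) k l = 1] (fun=> 1%N)) //.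
split.
- move=> s /= [His Hjs]; split; first by rewrite modz_ge0 //= ?ltz_pmod ?ltz_nat; lia.
  apply/Edelta_eq1; exists (s %/ r%:Z)%Z.
  by rewrite -His -Hjs -!Iset_divz.
- move=> s s' /set_mem [His Hjs] /set_mem [Hi's Hj's] Hm.
  rewrite (divz_eq s r%:Z) (divz_eq s' r%:Z) Hm; congr (_ * _ + _).
  move: His Hi's; rewrite (Iset_divz s Hi) (Iset_divz s' Hi) Hm => <- /eqP.
  by rewrite (inj_eq (addrI _)) (inj_eq (mulIf nn0)) => /eqP.
- move=> s0 /= [/andP [s0ge s0lt] /Edelta_eq1 [t [Hk Hl]]].
  exists (s0 + t * r%:Z) => /=.
    by rewrite (Iset_shift Hi) (Iset_shift Hj) -Hk -Hl.
  by rewrite addrC modzMDl modz_small ?s0ge ?s0lt.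
Qed.

Lemma Mof_sum_Edelta i j k l : Iset n r i -> Iset n r j ->
  Mof i j k l = \sum_(s < r) Edelta n (i s) (j s) k l.
Proof.
move=> Hi Hj; rewrite Mof_residues //.
set S0 := [set s0 : int | _].
rewrite (eq_fsbigr (fun s0 => nat_of_bool (s0 \in S0))); last first.
  by move=> x /set_mem Hx; rewrite mem_set.
rewrite (fsbig_fwiden (map Posz (iota 0 r))); first last.
- by move=> x [/= Hx HS]; rewrite /= memNset.
- by rewrite map_inj_uniq ?iota_uniq //; move=> a b [].
- move=> x [/andP [x0 xr] _] /=; apply/mapP; exists `|x|%N; last by lia.
  by rewrite mem_iota add0n; lia.
rewrite -[r in iota 0 r]subn0 big_map big_mkord.
rewrite (big_morph Posz PoszD (erefl 0%:Z)); apply: eq_bigr => s _.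
case: (Edelta_01 n (i s) (j s) k l) => E.
  by rewrite E memNset // /S0 /= => -[_]; rewrite E.
by rewrite E mem_set // /S0 /=; split => //; rewrite ltz_nat ltn_ord.
Qed.

Lemma Mof_ge1 x y (s : 'I_r) : Iset n r x -> Iset n r y -> 1 <= Mof x y (x s) (y s).
Proof.
move=> Hx Hy; rewrite (Mof_sum_Edelta _ _ Hx Hy) (bigD1 s) //= Edelta_id lerDl.
by apply: sumr_ge0 => s' _; exact: Edelta_ge0.
Qed.

Lemma Mof_ge2 x y (s s' : 'I_r) : Iset n r x -> Iset n r y -> s != s' ->
  Edelta n (x s) (y s) (x s') (y s') = 1 -> 2 <= Mof x y (x s') (y s').
Proof.
move=> Hx Hy ss' E; rewrite (Mof_sum_Edelta _ _ Hx Hy) (bigD1 s') //= (bigD1 s) //=.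
rewrite E Edelta_id addrA lerDl.
by apply: sumr_ge0 => s'' _; exact: Edelta_ge0.
Qed.

Lemma Mof_self x k l : Iset n r x ->
  Mof x x k l = if k == l then \sum_(s < r) unitv n (x s) k else 0.
Proof.
move=> Hx; rewrite (Mof_sum_Edelta _ _ Hx Hx).
by case: eqP => kl; [apply: eq_bigr|apply: big1] => s _; rewrite Edelta_diag;
  case: eqP.
Qed.

Lemma ro_Mof a b k : Iset n r a -> Iset n r b ->
  ro (Mof a b) k = \sum_(s < r) unitv n (a s) k.
Proof.
move=> Ha Hb; rewrite /ro.
under eq_fsbigr => l _ do rewrite (Mof_sum_Edelta _ _ Ha Hb).
pose g := fun s : 'I_r => b s + (k - a s).
pose A := seq_fset tt (map g (enum 'I_r)).
rewrite (fsbigTE A); last first.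
  move=> l lA; apply: big1 => s _; apply/Edelta_eq0 => -[t [Hk Hl]].
  move/negP: lA; apply; rewrite seq_fsetE; apply/mapP; exists s.
    by rewrite mem_enum.
  by rewrite /g Hl Hk; ring.
rewrite exchange_big /=; apply: eq_bigr => s _.
have nn0 : n%:Z != 0 by lia.
case: (asboolP (exists t : int, k = a s + t * n%:Z)) => [[t Ht]|Hn]; last first.
  rewrite unitv_eq0 // big1 // => l _; apply/Edelta_eq0 => -[t [Hk _]]; apply: Hn.
  by exists t.
rewrite unitv_eq1; last by exists t.
rewrite (bigD1_seq (b s + t * n%:Z)); last 2 first.
- apply: mem_sort_keys; apply/mapP; exists s; first by rewrite mem_enum.
  by rewrite /g Ht; ring.
- exact: (fset_uniq (seq_fset tt (map g (enum 'I_r)))).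
rewrite (_ : Edelta _ _ _ _ _ = 1); last by apply/Edelta_eq1; exists t.
rewrite big1 ?addr0 // => l /eqP Hl; apply/Edelta_eq0 => -[t' [Hk Hl']].
apply: Hl; rewrite Hl'; congr (_ + _ * _).
by apply/(mulIf nn0)/(addrI (a s)); rewrite -Ht -Hk.
Qed.

Lemma Iset_shift_at x s0 d : Iset n r x -> Iset n r (shift_at r x s0 d).
Proof. by move=> Hx k; rewrite /shift_at Hx modzDr; ring. Qed.

Lemma shift_at_ord x (s0 s : 'I_r) d :
  shift_at r x s0 d s = x s + (if s == s0 then d else 0).
Proof.
rewrite /shift_at modz_small; last by apply/andP; split; [|rewrite ltz_nat ltn_ord].
by rewrite eqz_nat.
Qed.

Lemma Mof_shift_at_l a b (s0 : 'I_r) d k l : Iset n r a -> Iset n r b ->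
  Mof (shift_at r a s0 d) b k l
  = Mof a b k l - Edelta n (a s0) (b s0) k l + Edelta n (a s0 + d) (b s0) k l.
Proof.
move=> Ha Hb.
rewrite (Mof_sum_Edelta _ _ (Iset_shift_at _ _ Ha) Hb) (Mof_sum_Edelta _ _ Ha Hb).
rewrite (bigD1 s0) //= [in RHS](bigD1 s0) //= shift_at_ord eqxx.
rewrite (eq_bigr (fun s : 'I_r => Edelta n (a s) (b s) k l)); first by ring.
by move=> s /negPf Hs; rewrite shift_at_ord Hs addr0.
Qed.

Lemma Mof_shift_at_r a b (s0 : 'I_r) d k l : Iset n r a -> Iset n r b ->
  Mof a (shift_at r b s0 d) k l
  = Mof a b k l - Edelta n (a s0) (b s0) k l + Edelta n (a s0) (b s0 + d) k l.
Proof.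
move=> Ha Hb.
rewrite (Mof_sum_Edelta _ _ Ha (Iset_shift_at _ _ Hb)) (Mof_sum_Edelta _ _ Ha Hb).
rewrite (bigD1 s0) //= [in RHS](bigD1 s0) //= shift_at_ord eqxx.
rewrite (eq_bigr (fun s : 'I_r => Edelta n (a s) (b s) k l)); first by ring.
by move=> s /negPf Hs; rewrite shift_at_ord Hs addr0.
Qed.

Section Raising.

Variables (B : mat) (h d : int).
Hypothesis d_neq0 : d != 0.

Definition raising_mat : mat := fun k l =>
  Edelta n h (h + d) k l + diagm (fun t => ro B t - unitv n (h + d) t) k l.

Definition moved_mat i : mat := fun k l =>
  B k l + Edelta n h i k l - Edelta n (h + d) i k l.

Local Notation X := raising_mat.
Local Notation C := moved_mat.

Lemma raising_mat_offdiag k l : k != l -> X k l = Edelta n h (h + d) k l.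
Proof. by move=> /negPf kl; rewrite /raising_mat /diagm kl addr0. Qed.

Lemma raising_support x y (s : 'I_r) : Iset n r x -> Iset n r y ->
  Mof x y = X -> x s != y s ->
  exists t, x s = h + t * n%:Z /\ y s = h + d + t * n%:Z.
Proof.
move=> Hx Hy HX xy; have := Mof_ge1 s Hx Hy.
rewrite HX raising_mat_offdiag //.
case: (Edelta_01 n h (h + d) (x s) (y s)) => [-> //|/Edelta_eq1 [t [-> ->]] _].
by exists t.
Qed.

Lemma Mof_raising_mat x y : Iset n r x -> Iset n r y -> Mof x y = X ->
  exists s0 : 'I_r, y = shift_at r x s0 d.
Proof.
move=> Hx Hy HX.
have [s0 xy0|yx] := pickP (fun s : 'I_r => x s != y s); last first.
  have Eyx : y = x by apply: Iset_ext Hy Hx _ => // s; move/negbFE/eqP: (yx s).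
  have := congr1 (fun M => M h (h + d)) HX => /=.
  have hd : h != h + d by lia.
  by rewrite Eyx Mof_self // raising_mat_offdiag // (negPf hd) Edelta_id.
have [t [Hx0 Hy0]] := raising_support Hx Hy HX xy0.
have same_off : forall s : 'I_r, s != s0 -> x s = y s.
  move=> s ss0; apply/eqP; apply: contraT => xy.
  have [t' [Hx1 Hy1]] := raising_support Hx Hy HX xy.
  have := Mof_ge2 Hx Hy ss0.
  rewrite HX raising_mat_offdiag // Hx0 Hy0 Hx1 Hy1 !Edelta_shift.
  have E : Edelta n h (h + d) (h + t * n%:Z) (h + d + t * n%:Z) = 1.
    by apply/Edelta_eq1; exists t.
  by rewrite E => /(_ erefl).
exists s0.
apply: Iset_ext Hy (Iset_shift_at _ _ Hx) _ => // s.
rewrite shift_at_ord; case: eqP => [->|/eqP ne]; first by rewrite Hy0 Hx0; ring.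
by rewrite addr0 same_off.
Qed.

Lemma Mof_shift_at_eq_iff x j (s0 : 'I_r) t : Iset n r x -> Iset n r j ->
  x s0 = h + t * n%:Z ->
  Mof (shift_at r x s0 d) j = B <-> Mof x j = C (j s0 - t * n%:Z).
Proof.
move=> Hx Hj Hxs.
set i := j s0 - t * n%:Z.
have HM k l : Mof (shift_at r x s0 d) j k l = Mof x j k l - C i k l + B k l.
  rewrite Mof_shift_at_l // Hxs /moved_mat.
  have -> : j s0 = i + t * n%:Z by rewrite /i; ring.
  have -> : h + t * n%:Z + d = h + d + t * n%:Z by ring.
  by rewrite !Edelta_shift; ring.
split => HB; apply/funext => k; apply/funext => l.
  have := congr1 (fun M => M k l) HB; rewrite /= HM; lia.
by rewrite HM HB subrr add0r.
Qed.

Lemma Mof_shift_at_raising x j (s0 : 'I_r) t : Iset n r x -> Iset n r j ->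
  x s0 = h + t * n%:Z -> Mof (shift_at r x s0 d) j = B ->
  Mof x (shift_at r x s0 d) = X.
Proof.
move=> Hx Hj Hxs HB; apply/funext => k; apply/funext => l.
have hd_shift : h + t * n%:Z + d = h + d + t * n%:Z by ring.
rewrite Mof_shift_at_r // Mof_self // Edelta_diag Hxs hd_shift Edelta_shift.
rewrite /raising_mat /diagm; case: eqP => [<-|kl]; last by rewrite subrr add0r addr0.
rewrite -HB (ro_Mof _ (Iset_shift_at _ _ Hx) Hj) (bigD1 s0) //= [in RHS](bigD1 s0) //=.
rewrite shift_at_ord eqxx Hxs hd_shift !unitv_shift.
under [in RHS]eq_bigr => s Hs do rewrite shift_at_ord (negPf Hs) addr0.
by ring.
Qed.

Lemma moved_mat_pos x j i : Mof x j = C i -> 1 <= B (h + d) i.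
Proof.
move=> HM; have := congr1 (fun M => M (h + d) i) HM.
rewrite /= /moved_mat Edelta_row_shift_eq0 // Edelta_id /Mof; lia.
Qed.

Lemma raising_count_at x j (s0 : 'I_r) (L : seq int) : Iset n r x -> Iset n r j ->
  uniq L -> (forall i, 1 <= B (h + d) i -> i \in L) ->
  ind (Mof (shift_at r x s0 d) j = B /\ Mof x (shift_at r x s0 d) = X)
  = \sum_(i <- L) ind (Edelta n h i (x s0) (j s0) = 1) * ind (Mof x j = C i).
Proof.
move=> Hx Hj uL HL; have nn0 : n%:Z != 0 by lia.
have [[t Ht]|Hn] := asboolP (exists t, x s0 = h + t * n%:Z); last first.
  rewrite indF; last first.
    move=> [_ HX]; have xy : x s0 != shift_at r x s0 d s0.
      by rewrite shift_at_ord eqxx; lia.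
    have [t [Ht _]] := raising_support Hx (Iset_shift_at _ _ Hx) HX xy.
    by apply: Hn; exists t.
  rewrite big1 // => i _; rewrite indF ?mul0r // => /Edelta_eq1 [t [H1 _]].
  by apply: Hn; exists t.
set i0 := j s0 - t * n%:Z.
have Ei i : Edelta n h i (x s0) (j s0) = 1 <-> i = i0.
  split => [/Edelta_eq1 [t' [H1 H2]]|->]; last first.
    by apply/Edelta_eq1; exists t; split => //; rewrite /i0; ring.
  have tt' : t' = t by apply: (mulIf nn0); apply: (addrI h); rewrite -H1 -Ht.
  by rewrite /i0 H2 tt'; ring.
have -> : ind (Mof (shift_at r x s0 d) j = B /\ Mof x (shift_at r x s0 d) = X)
    = ind (Mof x j = C i0).
  congr ind; apply: propext; rewrite -(Mof_shift_at_eq_iff Hx Hj Ht).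
  by split=> [[]//|HB]; split => //; exact: (Mof_shift_at_raising Hx Hj Ht HB).
have [i0L|i0L] := boolP (i0 \in L).
  rewrite (bigD1_seq i0) //= (indT (proj2 (Ei i0) erefl)) mul1r big1 ?addr0 //.
  by move=> i /eqP ii0; rewrite indF ?mul0r // => /Ei.
rewrite indF; last by move=> /moved_mat_pos /HL; apply/negP.
rewrite big1_seq // => i /andP [_ iL]; rewrite indF ?mul0r // => /Ei Eii.
by move: iL; rewrite Eii (negPf i0L).
Qed.

Lemma raising_count x j (L : seq int) : Iset n r x -> Iset n r j ->
  uniq L -> (forall i, 1 <= B (h + d) i -> i \in L) ->
  \sum_(s0 < r) ind (Mof (shift_at r x s0 d) j = B)
                * ind (Mof x (shift_at r x s0 d) = X)
  = \sum_(i <- L) (B h i + 1)%:~R * ind (Mof x j = C i).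
Proof.
move=> Hx Hj uL HL.
under eq_bigr => s0 _ do rewrite -ind_and (raising_count_at _ Hx Hj uL HL).
rewrite exchange_big /=; apply: eq_bigr => i _; rewrite -mulr_suml.
have [HM|HM] := asboolP (Mof x j = C i); last by rewrite indF // !mulr0.
rewrite indT // !mulr1.
have -> : \sum_(s0 < r) ind (Edelta n h i (x s0) (j s0) = 1) = (Mof x j h i)%:~R.
  rewrite Mof_sum_Edelta // rmorph_sum; apply: eq_bigr => s _.
  by rewrite Edelta_sym; case: (Edelta_01 n (x s) (j s) h i) => ->;
    [rewrite indF|rewrite indT].
by rewrite HM /moved_mat Edelta_sym Edelta_row_shift_eq0 // Edelta_id subr0.
Qed.

Lemma br_raising_mat w x : Iset n r x ->
  br n r X w x = \sum_(s0 < r) w (shift_at r x s0 d)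
                             * ind (Mof x (shift_at r x s0 d) = X).
Proof.
move=> Hx.
rewrite br_ind (fsbigE (map (fun s0 : 'I_r => shift_at r x s0 d) (enum 'I_r)));
  first last.
- move=> y Iy yn; rewrite indF ?mulr0 // => -[_ HX].
  have [s0 E] := Mof_raising_mat Hx Iy HX.
  by move/negP: yn; apply; apply/mapP; exists s0; rewrite ?mem_enum.
- by move=> y /= /mapP [s0 _ ->]; exact: Iset_shift_at.
- rewrite map_inj_uniq ?enum_uniq // => s0 s1 E.
  have := congr1 (fun f => f (s0 : nat)%:Z) E; rewrite !shift_at_ord eqxx.
  case: eqP => // _ /eqP.
  by rewrite addr0 -subr_eq0 addrAC subrr add0r (negPf d_neq0).
rewrite big_map big_enum_cond /= big_mkcond /=; apply: eq_bigr => s0 _.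
rewrite mem_set /=; last exact: Iset_shift_at.
by rewrite ind_and (indT Hx) mul1r.
Qed.

Lemma br_raising v : in_Theta n r B -> Omega n r v ->
  br n r X (br n r B v)
  = fun x => \sum_(i \in [set i : int | 1 <= B (h + d) i])
               (B h i + 1)%:~R * br n r (C i) v x.
Proof.
move=> HB Hv; apply/funext => x.
have Rfin : finite_set [set i : int | 1 <= B (h + d) i].
  case: HB => _ _ Hfin _; apply: sub_finite_set (Hfin (h + d)).
  by move=> i /= Hi; lia.
rewrite fsbig_finite //; set LR := fset_set _.
have HL i : 1 <= B (h + d) i -> i \in LR by move=> Hi; rewrite in_fset_set // inE.
have [Hx|Hx] := asboolP (Iset n r x); last first.
  by rewrite br_notIset // big1 // => i _; rewrite br_notIset ?mulr0.
have [Lv [uLv LvI vLv]] := Omega_seq Hv.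
rewrite br_raising_mat //.
under [LHS]eq_bigr => s0 _
  do rewrite (br_seq B uLv LvI vLv (Iset_shift_at s0 d Hx)) mulr_suml.
under [RHS]eq_bigr do rewrite (br_seq _ uLv LvI vLv Hx) mulr_sumr.
rewrite !(exchange_big _ _ Lv) /=; apply: eq_big_seq => j jL.
under eq_bigr do rewrite -mulrA.
under [RHS]eq_bigr do rewrite mulrCA.
by rewrite -!mulr_sumr (raising_count Hx (LvI _ jL) (fset_uniq _) HL).
Qed.

End Raising.

End PeriodicSequences.

Theorem proposition6p2p3 (n r : nat) (h : int) (B : mat) :
  (2 <= n)%N -> (1 <= r)%N -> 1 <= h <= n%:Z -> in_Theta n r B ->
  (forall eps : int, (eps = 1 \/ eps = -1) -> 1 <= ro B (h + eps) ->
     forall v, Omega n r v ->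
       br n r (fun k l => Edelta n h (h + eps) k l
                          + diagm (fun t => ro B t - unitv n (h + eps) t) k l)
          (br n r B v)
       = fun x => \sum_(i \in [set i : int | 1 <= B (h + eps) i])
                    (B h i + 1)%:~R *
                    br n r (fun k l => B k l + Edelta n h i k l
                                       - Edelta n (h + eps) i k l) v x)
  /\
  (forall m : int, m != 0 -> 1 <= ro B h ->
     forall v, Omega n r v ->
       br n r (fun k l => Edelta n h (h + m * n%:Z) k l
                          + diagm (fun t => ro B t - unitv n h t) k l)
          (br n r B v)
       = fun x => \sum_(s \in [set s : int | 1 <= B h s])
                    (B h (s + m * n%:Z) + 1)%:~R *
                    br n r (fun k l => B k l + Edelta n h (s + m * n%:Z) k l
                                       - Edelta n h s k l) v x).
Proof.
move=> n2 r_gt0 _ HB; have n_gt0 : (0 < n)%N by apply: leq_trans n2.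
split=> [eps Heps _ v Hv|m m_neq0 _ v Hv].
  have eps_neq0 : eps != 0 by case: Heps => ->.
  exact: (br_raising n_gt0 r_gt0 h eps_neq0 HB Hv).
have mn_neq0 : m * n%:Z != 0 by rewrite mulf_eq0 negb_or m_neq0 /=; lia.
have := br_raising n_gt0 r_gt0 h mn_neq0 HB Hv.
rewrite /raising_mat unitv_shift => ->; apply/funext => x.
(* reindex the columns by [i = s + m n]: row [h + m n] of [B] is row [h] shifted *)
rewrite (reindex_fsbig (fun s => s + m * n%:Z) [set s | 1 <= B h s]).
  by apply: eq_fsbigr => s _; rewrite /moved_mat Edelta_shift.
split.
- by move=> s /= Hs; rewrite (Theta_shift HB).
- by move=> s s' _ _ /addIr.
- move=> i /= Hi; exists (i - m * n%:Z); last by rewrite subrK.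
  by rewrite /= -(Theta_shift HB h (i - m * n%:Z) m) subrK.
Qed.
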